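(* Let $E$ be a reflexive, strictly convex Banach space and $C$ a closed convex subset of $E$. Suppose that $\mathcal{S}=\{T_s:s\in S\}$ is a representation of a semigroup $S$ on $C$ by nonexpansive self-mappings. Then the following are equivalent: (1) there is a closed, $S$-invariant convex subset $C_0$ of $C$ such that $A_{C_0}(\mathcal{S})\neq\emptyset$; (2) $S$ has a common fixed point in $C$.
   Context: A representation of a semigroup $S$ on $C$ is a family of maps $T_s:C\to C$ with $T_{st}=T_s\circ T_t$ for $s,t\in S$; it is nonexpansive if $\|T_sx-T_sy\|\le\|x-y\|$ for all $s\in S$, $x,y\in C$. A subset $C_0\subseteq C$ is $S$-invariant if $T_s(C_0)\subseteq C_0$ for all $s$. For a subset $D\subseteq C$, $A_D(\mathcal{S})$ is the set of all $a\in E$ with $\|a-T_sx\|\le\|a-x\|$ for all $x\in D$, $s\in S$ (attractive points for $D$). A common fixed point is $x\in C$ with $T_sx=x$ for all $s\in S$. *)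

From HB Require Import structures.
From mathcomp Require Import all_boot all_order all_algebra.
From mathcomp Require Import all_classical all_reals all_analysis.
Set Implicit Arguments. Unset Strict Implicit. Unset Printing Implicit Defensive.
Import Order.TTheory GRing.Theory Num.Theory.
Import numFieldNormedType.Exports.
Local Open Scope classical_set_scope.
Local Open Scope ring_scope.

Definition lin_functional (R : realType) (E : normedModType R) (f : E -> R) :=
  forall (a : R) (x y : E), f (a *: x + y) = a * f x + f y.

Definition dual_elt (R : realType) (E : normedModType R) (f : E -> R) :=
  lin_functional f /\ continuous f.

(* Reflexive: the canonical embedding J : E -> E^** is surjective, i.e. every
   bounded linear functional phi on E^* (with its operator norm) is evaluation
   at some x in E.  "|phi f| <= M * ||f||_op" is written as
   "for every c with |f x| <= c ||x|| for all x, |phi f| <= M c". *)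
Definition reflexive_space (R : realType) (E : normedModType R) :=
  forall phi : (E -> R) -> R,
    (forall (a : R) (f g : E -> R), dual_elt f -> dual_elt g ->
        phi (fun x => a * f x + g x) = a * phi f + phi g) ->
    (exists M : R, forall f : E -> R, dual_elt f ->
        forall c : R, (forall x, `|f x| <= c * `|x|) -> `|phi f| <= M * c) ->
    exists x0 : E, forall f : E -> R, dual_elt f -> phi f = f x0.

Definition strictly_convex_space (R : realType) (E : normedModType R) :=
  forall x y : E, `|x| = 1 -> `|y| = 1 -> x != y -> `|(2^-1 : R) *: (x + y)| < 1.

Definition convex_subset (R : realType) (E : normedModType R) (A : set E) :=
  forall (x y : E) (t : R), A x -> A y -> 0 <= t -> t <= 1 ->
    A (t *: x + (1 - t) *: y).

Definition attractive_points (R : realType) (E : normedModType R) (S : Type)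
    (T : S -> E -> E) (D : set E) : set E :=
  [set a | forall x s, D x -> `|a - T s x| <= `|a - x|].

From HB Require Import structures.
From mathcomp Require Import all_boot all_order all_algebra.
From mathcomp Require Import all_classical all_reals all_analysis.
From mathcomp Require Import lra ring.
Set Implicit Arguments. Unset Strict Implicit. Unset Printing Implicit Defensive.
Import Order.TTheory GRing.Theory Num.Theory.
Import numFieldNormedType.Exports.
Local Open Scope classical_set_scope.
Local Open Scope ring_scope.

(* Let [a] be an attractive point for [C0] and [z] a point of [C0] nearest to
   [a].  Such a point exists because [E] is reflexive: a minimizing sequence has
   a weak cluster point, which by Mazur's lemma (a consequence of Hahn-Banach)
   still lies in [C0] and is no farther from [a].  Each [T s z] lies in [C0] and
   is no farther from [a] than [z], so it is a nearest point too, and strict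
   convexity makes the nearest point unique: [T s z = z].  Conversely a common
   fixed point [x] makes [[set x]] such a set [C0]. *)

Section HahnBanach.
Variables (R : realType) (E : lmodType R) (q : E -> R).

Definition dominated_linear_graph (G : set (E * R)) :=
  [/\ (forall x r r', G (x, r) -> G (x, r') -> r = r'),
      (forall (a : R) x y r s, G (x, r) -> G (y, s) -> G (a *: x + y, a * r + s)) &
      (forall x r, G (x, r) -> r <= q x)].

Lemma dominated_linear_graph_bigcup (F : set (set (E * R))) :
  F `<=` dominated_linear_graph -> total_on F subset ->
  dominated_linear_graph (\bigcup_(X in F) X).
Proof.
move=> FP tot; split.
- move=> x r r' [X FX Xr] [Y FY Yr].
  have [XY|YX] := tot _ _ FX FY.
  + by case: (FP _ FY) => fY _ _; apply: fY (XY _ Xr) Yr.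
  + by case: (FP _ FX) => fX _ _; apply: fX Xr (YX _ Yr).
- move=> a x y r s [X FX Xr] [Y FY Yr].
  have [XY|YX] := tot _ _ FX FY.
  + by exists Y => //; case: (FP _ FY) => _ lY _; apply: lY (XY _ Xr) Yr.
  + by exists X => //; case: (FP _ FX) => _ lX _; apply: lX Xr (YX _ Yr).
- by move=> x r [X FX Xr]; case: (FP _ FX) => _ _; apply.
Qed.

Lemma dominated_linear_graph_set1 : 0 <= q 0 ->
  dominated_linear_graph [set (0, 0)].
Proof.
move=> q0; split.
- by move=> x r r' [_ ->] [_ ->].
- by move=> a x y r s [-> ->] [-> ->]; rewrite scaler0 mulr0 !addr0.
- by move=> x r [-> ->].
Qed.

Lemma dominated_linear_graph00 G x r :
  dominated_linear_graph G -> G (x, r) -> G (0, 0).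
Proof.
case=> _ Glin _ Gxr; have := Glin (-1) x x r r Gxr Gxr.
by rewrite scaleN1r mulN1r !addNr.
Qed.

Definition graph_extension (G : set (E * R)) (v : E) (c : R) : set (E * R) :=
  [set p | exists m r t, G (m, r) /\ p = (m + t *: v, r + t * c)].

Hypothesis q_convex : forall x y (t : R), 0 <= t -> t <= 1 ->
  q (t *: x + (1 - t) *: y) <= t * q x + (1 - t) * q y.

Section Extension.
Variables (G : set (E * R)) (v : E).
Hypotheses (G_dom : dominated_linear_graph G) (G00 : G (0, 0)).
Hypothesis v_notin : ~ exists r, G (v, r).

Lemma graph_extension_proper c : G `<` graph_extension G v c.
Proof.
split.
- move=> [x r] Gxr; exists x, r, 0; split => //.
  by rewrite scale0r mul0r !addr0.
- move=> GG; apply: v_notin; exists c; apply: GG; exists 0, 0, 1; split => //.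
  by rewrite add0r scale1r add0r mul1r.
Qed.

Lemma graph_extension_functional c x r r' :
  graph_extension G v c (x, r) -> graph_extension G v c (x, r') -> r = r'.
Proof.
case: G_dom => Gfun Glin _.
move=> [m [u [t [Gmu [-> ->]]]]] [m' [u' [t' [Gmu' [mm' ->]]]]].
have tt' : t = t'.
  apply: contrapT => /eqP ntt'; apply: v_notin.
  exists ((t' - t)^-1 * (u - u')).
  have := Glin (-1) m' m u' u Gmu' Gmu.
  move=> /(Glin ((t' - t)^-1) _ 0 _ 0)/(_ G00); rewrite !addr0.
  have -> : (-1) *: m' + m = (t' - t) *: v.
    have -> : m = m' + t' *: v - t *: v by rewrite -mm' addrK.
    by rewrite scaleN1r addrA addKr scalerBl.
  rewrite scalerA mulVf ?scale1r; last by rewrite subr_eq0 eq_sym.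
  by rewrite mulN1r [- u' + u]addrC.
move: mm'; rewrite -tt' => /addIr mm'; rewrite -{}mm' in Gmu'.
by rewrite (Gfun _ _ _ Gmu Gmu').
Qed.

Lemma graph_extension_linear c (a : R) x y r s :
  graph_extension G v c (x, r) -> graph_extension G v c (y, s) ->
  graph_extension G v c (a *: x + y, a * r + s).
Proof.
case: G_dom => _ Glin _.
move=> [m [u [t [Gmu [-> ->]]]]] [m' [u' [t' [Gmu' [-> ->]]]]].
exists (a *: m + m'), (a * u + u'), (a * t + t'); split; first exact: Glin.
congr (_, _); last by ring.
by rewrite !scalerDr !scalerDl scalerA addrACA.
Qed.

Lemma graph_extension_dominated c :
  (forall m r s, G (m, r) -> 0 < s -> (r - q (m - s *: v)) / s <= c) ->
  (forall m r t, G (m, r) -> 0 < t -> c <= (q (m + t *: v) - r) / t) ->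
  forall x r, graph_extension G v c (x, r) -> r <= q x.
Proof.
case: G_dom => _ _ Gq lec cle x r [m [u [t [Gmu [-> ->]]]]].
have [t0|t0|->] := ltrgt0P t.
- have := cle _ _ _ Gmu t0; rewrite ler_pdivlMr // => h.
  rewrite mulrC; lra.
- have := lec _ _ (- t) Gmu; rewrite oppr_gt0 => /(_ t0).
  rewrite scaleNr opprK ler_pdivrMr ?oppr_gt0 // => h.
  rewrite mulrC; lra.
- by rewrite scale0r mul0r !addr0; apply: Gq.
Qed.

Lemma graph_extension_slope_le m r s m' r' t :
  G (m, r) -> 0 < s -> G (m', r') -> 0 < t ->
  (r - q (m - s *: v)) / s <= (q (m' + t *: v) - r') / t.
Proof.
case: G_dom => _ Glin Gq Gmr s0 Gmr' t0.
pose k := (s + t)^-1.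
have k0 : 0 < k by rewrite invr_gt0; lra.
have tk0 : 0 <= t * k by rewrite mulr_ge0 // ltW.
have e1 : 1 - t * k = s * k by rewrite /k; field; apply/eqP; lra.
have tk1 : t * k <= 1 by rewrite -subr_ge0 e1 mulr_ge0 // ltW.
have Gw : G ((t * k) *: m + (s * k) *: m', t * k * r + s * k * r').
  have := Glin (s * k) m' 0 r' 0 Gmr' G00; rewrite !addr0.
  exact: Glin.
have comb : (t * k) *: m + (s * k) *: m' =
    (t * k) *: (m - s *: v) + (1 - t * k) *: (m' + t *: v).
  rewrite e1 !scalerDr !scalerN !scalerA.
  rewrite [s * k * t]mulrAC [t * k * s]mulrAC [t * s]mulrC.
  by rewrite addrACA addNr addr0.
rewrite comb in Gw.
move: (le_trans (Gq _ _ Gw) (q_convex _ _ tk0 tk1)); rewrite e1 => Gw_le.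
have : t * r + s * r' <= t * q (m - s *: v) + s * q (m' + t *: v).
  rewrite -(ler_pM2l k0) !mulrDr.
  by rewrite ![k * (_ * _)]mulrA ![k * _]mulrC.
rewrite ler_pdivrMr // mulrAC ler_pdivlMr //; nra.
Qed.

Lemma exists_dominated_graph_extension :
  exists c, dominated_linear_graph (graph_extension G v c).
Proof.
pose L := [set l | exists m r s, [/\ G (m, r), 0 < s & l = (r - q (m - s *: v)) / s]].
have L0 : L !=set0 by exists ((0 - q (0 - 1 *: v)) / 1); exists 0, 0, 1.
have Lub : ubound L ((q (0 + 1 *: v) - 0) / 1).
  by move=> _ [m [r [s [Gmr s0 ->]]]]; exact: graph_extension_slope_le.
exists (sup L); split.
- exact: graph_extension_functional.
- exact: graph_extension_linear.
apply: graph_extension_dominated => [m r s Gmr s0|m r t Gmr t0].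
- by apply: sup_upper_bound; [split => //; exists ((q (0 + 1 *: v) - 0) / 1)|exists m, r, s].
- apply: ge_sup => // _ [m' [r' [s [Gmr' s0 ->]]]].
  exact: graph_extension_slope_le.
Qed.
End Extension.

Lemma hahn_banach_convex : 0 <= q 0 ->
  exists F : E -> R, (forall (a : R) x y, F (a *: x + y) = a * F x + F y) /\
                     forall x, F x <= q x.
Proof.
move=> q0.
have [A [A_dom A_max]] := Zorn_bigcup dominated_linear_graph_bigcup.
have A00 : A (0, 0).
  apply: contrapT => nA00; apply: (A_max [set (0, 0)]).
  - split=> [p Ap|/(_ (0, 0) erefl)//]; case: p Ap => x r Axr.
    by exfalso; apply/nA00/(dominated_linear_graph00 A_dom Axr).
  - exact: dominated_linear_graph_set1.
have A_total x : exists r, A (x, r).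
  apply: contrapT => nx.
  have [c Ac] := exists_dominated_graph_extension A_dom A00 nx.
  exact: A_max _ (graph_extension_proper A00 nx c) Ac.
pose F x := xget 0 [set r | A (x, r)].
have AF x : A (x, F x) by exact: (xgetPex 0 (A_total x)).
case: A_dom => Afun Alin Aq.
exists F; split => [a x y|x]; last exact: Aq (AF x).
exact: Afun (AF _) (Alin _ _ _ _ _ (AF x) (AF y)).
Qed.
End HahnBanach.

Section LinearFunctional.
Variables (R : realType) (E : normedModType R) (f : E -> R).
Hypothesis f_lin : lin_functional f.

Lemma lin_functional0 : f 0 = 0.
Proof.
have := f_lin 1 0 0; rewrite scale1r addr0 mul1r => f00.
by apply: (addrI (f 0)); rewrite addr0 -f00.
Qed.

Lemma lin_functionalZ (a : R) x : f (a *: x) = a * f x.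
Proof. by rewrite -[a *: x]addr0 f_lin lin_functional0 addr0. Qed.

Lemma lin_functionalD x y : f (x + y) = f x + f y.
Proof. by rewrite -{1}[x]scale1r f_lin mul1r. Qed.

Lemma lin_functionalN x : f (- x) = - f x.
Proof. by rewrite -scaleN1r lin_functionalZ mulN1r. Qed.

Lemma lin_functionalB x y : f (x - y) = f x - f y.
Proof. by rewrite lin_functionalD lin_functionalN. Qed.

Lemma lin_functional_continuous (M : R) :
  (forall x, `|f x| <= M * `|x|) -> continuous f.
Proof.
move=> fM x; apply/cvgrPdist_le => e e0; apply/nbhs_normP.
have M1 : 0 < `|M| + 1 by rewrite ltr_wpDl.
exists (e / (`|M| + 1)) => /=; first by rewrite divr_gt0.
move=> y /= xy; rewrite -lin_functionalB (le_trans (fM _)) //.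
apply: (@le_trans _ _ ((`|M| + 1) * `|x - y|)).
  by rewrite ler_wpM2r // (le_trans (ler_norm M)) // lerDl.
by rewrite mulrC -ler_pdivlMr // ltW.
Qed.

Lemma lin_functional_continuous_le (c : R) :
  (forall x, f x <= `|x| + c) -> continuous f.
Proof.
move=> fc; apply: (@lin_functional_continuous (1 + c)) => w.
have [->|w0] := eqVneq w 0; first by rewrite lin_functional0 !normr0 mulr0.
have nw0 : 0 < `|w| by rewrite normr_gt0.
pose u := `|w|^-1 *: w.
have nu : `|u| = 1 by rewrite normrZ ger0_norm ?invr_ge0 // mulVf ?gt_eqF.
have wE : w = `|w| *: u by rewrite scalerA mulfV ?gt_eqF // scale1r.
rewrite {1}wE lin_functionalZ normrM ger0_norm // mulrC ler_wpM2r //.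
rewrite ler_norml; have := fc u; have := fc (- u).
rewrite lin_functionalN normrN nu; lra.
Qed.

End LinearFunctional.

Lemma dual_elt_bounded (R : realType) (E : normedModType R) (f : E -> R) :
  dual_elt f -> exists c, 0 <= c /\ forall x, `|f x| <= c * `|x|.
Proof.
case=> f_lin f_cont.
have /cvgrPdist_lt /(_ 1 ltr01) /nbhs_normP [d /= d0 hd] := f_cont 0.
exists (2 / d); split => [|x]; first by rewrite divr_ge0 // ltW.
have [->|x0] := eqVneq x 0; first by rewrite lin_functional0 // !normr0 mulr0.
have nx0 : 0 < `|x| by rewrite normr_gt0.
have k0 : 0 <= d / (2 * `|x|) by rewrite divr_ge0 // ltW // mulr_gt0.
have small : `|0 - (d / (2 * `|x|)) *: x| < d.
  rewrite sub0r normrN normrZ ger0_norm // invfM -!mulrA mulVf ?gt_eqF //.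
  by rewrite mulr1 gtr_pMr // invf_lt1 // ltr1n.
have := hd _ small; rewrite /= lin_functional0 // sub0r normrN.
rewrite lin_functionalZ // normrM ger0_norm // mulrAC ltr_pdivrMr ?mulr_gt0 //.
rewrite mul1r => /ltW.
by rewrite mulrAC ler_pdivlMr // mulrC.
Qed.

Section ConvexCombination.
Variables (R : pzRingType) (V : lmodType R).
Implicit Types (t : R) (x y : V).

Lemma convex_comb_id t x : t *: x + (1 - t) *: x = x.
Proof. by rewrite -scalerDl addrC subrK scale1r. Qed.

Lemma convex_combB t x y x' y' :
  t *: x + (1 - t) *: y - (t *: x' + (1 - t) *: y') =
  t *: (x - x') + (1 - t) *: (y - y').
Proof. by rewrite opprD addrACA -!scalerBr. Qed.

End ConvexCombination.

Section ConvexGeometry.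
Variables (R : realType) (E : normedModType R).
Implicit Types (K : set E) (x y w : E) (t r : R).

Lemma normr_convex_comb t x y : 0 <= t -> t <= 1 ->
  `|t *: x + (1 - t) *: y| <= t * `|x| + (1 - t) * `|y|.
Proof.
move=> t0 t1; apply: (le_trans (ler_normD _ _)).
by rewrite !normrZ !ger0_norm ?subr_ge0.
Qed.

Lemma convex_closed_ball (a : E) r : 0 < r -> convex_subset (closed_ball a r).
Proof.
move=> r0; rewrite closed_ballE // /closed_ball_ => x y t /= ax ay t0 t1.
rewrite -{1}(convex_comb_id t a) convex_combB.
apply: (le_trans (normr_convex_comb _ _ t0 t1)).
have t1' : 0 <= 1 - t by rewrite subr_ge0.
have := ler_wpM2l t0 ax; have := ler_wpM2l t1' ay; lra.
Qed.

Definition dist_set K (w : E) : R := inf [set `|w - y| | y in K].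

Lemma dist_set_le K w y : K y -> dist_set K w <= `|w - y|.
Proof. by move=> Ky; apply: ge_inf; [exists 0 => _ [? _ <-]|exists y]. Qed.

Lemma dist_set_ge K w r : K !=set0 ->
  (forall y, K y -> r <= `|w - y|) -> r <= dist_set K w.
Proof.
by move=> [y Ky] Kr; apply: lb_le_inf => [|_ [z Kz <-]]; [exists `|w - y|, y|exact: Kr].
Qed.

Lemma dist_set_adherent K w e : K !=set0 -> 0 < e ->
  exists2 y, K y & `|w - y| < dist_set K w + e.
Proof.
move=> [y0 Ky0] e0.
have Kinf : has_inf [set `|w - y| | y in K].
  by split; [exists `|w - y0|, y0|exists 0 => _ [? _ <-]].
by have [_ [y Ky <-] ye] := inf_adherent e0 Kinf; exists y.
Qed.

Lemma dist_set_convex K : convex_subset K -> K !=set0 ->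
  forall w1 w2 t, 0 <= t -> t <= 1 ->
  dist_set K (t *: w1 + (1 - t) *: w2) <= t * dist_set K w1 + (1 - t) * dist_set K w2.
Proof.
move=> Kconv K0 w1 w2 t t0 t1; apply/ler_addgt0Pr => e e0.
have [y1 Ky1 y1e] := dist_set_adherent w1 K0 e0.
have [y2 Ky2 y2e] := dist_set_adherent w2 K0 e0.
apply: (le_trans (dist_set_le _ (Kconv y1 y2 t Ky1 Ky2 t0 t1))).
rewrite convex_combB; apply: (le_trans (normr_convex_comb _ _ t0 t1)).
have t1' : 0 <= 1 - t by rewrite subr_ge0.
have := ler_wpM2l t0 (ltW y1e); have := ler_wpM2l t1' (ltW y2e); lra.
Qed.

(* Hahn-Banach applied to the convex function [w |-> dist_set K (w + x0) - r] *)
Lemma convex_separation K (x0 : E) r :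
  convex_subset K -> K !=set0 -> 0 < r -> (forall y, K y -> r <= `|y - x0|) ->
  exists F, dual_elt F /\ forall y, K y -> F y <= F x0 - r.
Proof.
move=> Kconv [y0 Ky0] r0 Kfar.
pose q w := dist_set K (w + x0) - r.
have q_convex w1 w2 t : 0 <= t -> t <= 1 ->
    q (t *: w1 + (1 - t) *: w2) <= t * q w1 + (1 - t) * q w2.
  move=> t0 t1; rewrite /q.
  have -> : t *: w1 + (1 - t) *: w2 + x0 = t *: (w1 + x0) + (1 - t) *: (w2 + x0).
    by rewrite !scalerDr addrACA convex_comb_id.
  have := dist_set_convex Kconv (ex_intro _ y0 Ky0) (w1 + x0) (w2 + x0) t0 t1.
  lra.
have q0 : 0 <= q 0.
  rewrite subr_ge0 add0r; apply: dist_set_ge; first by exists y0.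
  by move=> y Ky; rewrite distrC; exact: Kfar.
have [F [F_lin Fq]] := hahn_banach_convex q_convex q0.
exists F; split.
  split => //; apply: (@lin_functional_continuous_le _ _ _ F_lin `|x0 - y0|) => w.
  apply: (le_trans (Fq w)); rewrite /q.
  have := dist_set_le (w + x0) Ky0; have := ler_normD w (x0 - y0).
  rewrite addrA; lra.
move=> y Ky; have := Fq (y - x0); rewrite lin_functionalB // /q subrK.
have := dist_set_le y Ky; rewrite subrr normr0; lra.
Qed.

End ConvexGeometry.

Lemma ultra_bounded_cvg (R : realType) (I : Type) (U : set_system I)
    (g : I -> R) (B : R) :
  UltraFilter U -> (forall i, `|g i| <= B) -> g @ U --> lim (g @ U).
Proof.
move=> U_ultra gB; have U_proper : ProperFilter U by apply: ultra_proper.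
have gBU : U [set i | g i \in `[- B, B]].
  by apply: filterE => i /=; rewrite in_itv /= -ler_norml.
have [p [_ p_clust]] := @segment_compact R (- B) B (g @ U) _ gBU.
suff gp : g @ U --> p by rewrite (cvg_lim _ gp).
move=> N Np; have [//|UNc] := in_ultra_setVsetC (g @^-1` N) U_ultra.
by have [z [zNc zN]] := p_clust (~` N) N UNc Np.
Qed.

(* the ultrafilter limits of the [f (x i)] define a bounded linear functional on
   the dual, which reflexivity represents by a point *)
Lemma reflexive_ultra_weak_limit (R : realType) (E : normedModType R) (I : Type)
    (U : set_system I) (x : I -> E) (B : R) :
  reflexive_space E -> UltraFilter U -> (forall i, `|x i| <= B) ->
  exists x0, forall f, dual_elt f -> (fun i => f (x i)) @ U --> f x0.
Proof.
move=> E_refl U_ultra xB.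
have U_proper : ProperFilter U by apply: ultra_proper.
pose phi (f : E -> R) := lim ((fun i => f (x i)) @ U).
have phi_cvg f : dual_elt f -> (fun i => f (x i)) @ U --> phi f.
  move=> /dual_elt_bounded [c [c0 fc]].
  apply: (@ultra_bounded_cvg _ _ _ _ (c * B)) => // i.
  by apply: (le_trans (fc _)); rewrite ler_wpM2l.
have [x0 phiE] : exists x0, forall f, dual_elt f -> phi f = f x0.
  apply: E_refl => [a f g df dg|].
    have : (fun i => a * f (x i) + g (x i)) @ U --> a * phi f + phi g.
      exact: cvgD (cvgM (cvg_cst a) (phi_cvg f df)) (phi_cvg g dg).
    exact/cvg_lim.
  have nx_cvg : (fun i => `|x i|) @ U --> lim ((fun i => `|x i|) @ U).
    by apply: (@ultra_bounded_cvg _ _ _ _ B U_ultra) => i; rewrite normr_id.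
  exists (lim ((fun i => `|x i|) @ U)) => f df c fc.
  have fxc : U [set i | 0 <= `|x i| * c - `|f (x i)|].
    by apply: filterE => i /=; rewrite subr_ge0 mulrC.
  suff : 0 <= lim ((fun i => `|x i|) @ U) * c - `|phi f| by rewrite subr_ge0 mulrC.
  exact: (closed_cvg _ (@closed_ge R 0) fxc _
    (cvgB (cvgMr_tmp (b := c) nx_cvg) (cvg_norm (phi_cvg f df)))).
by exists x0 => f df; rewrite -phiE //; exact: phi_cvg.
Qed.

(* Mazur: otherwise a ball around [x0] misses [K], and a functional separating
   them contradicts the weak convergence *)
Lemma weak_limit_in_closure (R : realType) (E : normedModType R) (I : Type)
    (U : set_system I) (x : I -> E) (x0 : E) (K : set E) :
  ProperFilter U -> (forall f, dual_elt f -> (fun i => f (x i)) @ U --> f x0) ->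
  convex_subset K -> U [set i | K (x i)] -> closure K x0.
Proof.
move=> U_proper x0_lim Kconv UK.
apply: contrapT => /existsNP [B /not_implyP [/nbhs_normP [r /= r0 rB] KB0]].
have Kfar y : K y -> r <= `|y - x0|.
  move=> Ky; rewrite leNgt; apply/negP => yr; apply: KB0; exists y.
  by split => //; apply: rB; rewrite /= distrC.
have [i /= Kxi] := filter_ex UK.
have [F [dF FK]] := convex_separation Kconv (ex_intro _ (x i) Kxi) r0 Kfar.
suff : F x0 <= F x0 - r by lra.
apply: (closed_cvg _ (@closed_le R (F x0 - r)) _ _ (x0_lim F dF)).
by apply: filterS UK => j /FK.
Qed.

Lemma reflexive_nearest_point (R : realType) (E : normedModType R)
    (C0 : set E) (a : E) :
  reflexive_space E -> C0 !=set0 -> closed C0 -> convex_subset C0 ->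
  exists z, C0 z /\ forall y, C0 y -> `|a - z| <= `|a - y|.
Proof.
move=> E_refl C0n C0cl C0conv; pose d := dist_set C0 a.
have d0 : 0 <= d by apply: dist_set_ge.
have adherent n : exists y, C0 y /\ `|a - y| < d + n.+1%:R^-1.
  have [|y C0y ay] := @dist_set_adherent _ _ _ a n.+1%:R^-1 C0n.
    by rewrite invr_gt0.
  by exists y.
have [x C0x] := choice adherent.
have xB n : `|x n| <= `|a| + (d + 1).
  have [_ axn] := C0x n; have le1 : n.+1%:R^-1 <= 1 :> R by rewrite invf_le1 ?ler1n.
  have := ler_normB a (a - x n); rewrite opprB addrC subrK.
  by move: axn le1; generalize (n.+1%:R^-1 : R) => u; lra.
have [U [U_ultra oo_U]] := ultraFilterLemma (eventually_filter : ProperFilter \oo).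
have U_proper : ProperFilter U by apply: ultra_proper.
have [x0 x0_lim] := reflexive_ultra_weak_limit E_refl U_ultra xB.
have x0_in (e : R) : 0 < e -> C0 x0 /\ `|a - x0| <= d + e.
  move=> e0; have de0 : 0 < d + e by rewrite ltr_wpDl.
  pose K := C0 `&` closed_ball a (d + e).
  have K_closed : closed K by apply: closedI => //; exact: closed_ball_closed.
  have K_convex : convex_subset K.
    move=> y y' t [C0y ay] [C0y' ay'] t0 t1.
    split; [exact: C0conv|exact: convex_closed_ball de0 _ _ _ ay ay' t0 t1].
  have UK : U [set n | K (x n)].
    apply: oo_U; near=> n; have [C0xn axn] := C0x n.
    split=> //; rewrite closed_ballE // /closed_ball_ /=.
    have small : n.+1%:R^-1 < e by near: n; exact: near_infty_natSinv_lt (PosNum e0).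
    by rewrite (le_trans (ltW axn)) // lerD2l ltW.
  have := weak_limit_in_closure U_proper x0_lim K_convex UK.
  rewrite -(closure_id K).1 // => -[C0x0 ax0]; split => //.
  by move: ax0; rewrite closed_ballE.
have [C0x0 _] := x0_in 1 ltr01.
exists x0; split => // y C0y; apply: le_trans (dist_set_le a C0y).
by apply/ler_addgt0Pr => e /x0_in [].
Unshelve. all: by end_near.
Qed.

Section StrictlyConvex.
Variables (R : realType) (E : normedModType R).
Hypothesis E_sc : strictly_convex_space E.

Lemma strictly_convex_midpoint_lt (a z w : E) :
  `|a - z| = `|a - w| -> z != w -> `|a - (2^-1 *: z + 2^-1 *: w)| < `|a - z|.
Proof.
move=> azw zw.
have r0 : 0 < `|a - z|.
  rewrite normr_gt0 subr_eq0; apply: contra zw => /eqP az; move: azw.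
  by rewrite -az subrr normr0 => /esym/normr0_eq0/subr0_eq ->.
set r := `|a - z| in azw r0 *.
(* rescale the two equidistant points to the unit sphere around [a] *)
pose u := r^-1 *: (a - z); pose v := r^-1 *: (a - w).
have nu : `|u| = 1 by rewrite normrZ ger0_norm ?invr_ge0 ?ltW // mulVf ?gt_eqF.
have nv : `|v| = 1 by rewrite normrZ ger0_norm ?invr_ge0 ?ltW // -azw mulVf ?gt_eqF.
have uv : u != v.
  apply: contra zw => /eqP /(congr1 (fun p => r *: p)).
  by rewrite !scalerA mulfV ?gt_eqF // !scale1r => /addrI /oppr_inj ->.
have -> : a - (2^-1 *: z + 2^-1 *: w) = r *: (2^-1 *: (u + v)).
  rewrite scalerA mulrC -scalerA scalerDr /u /v !scalerA mulfV ?gt_eqF // !scale1r.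
  have half2 : (2^-1 + 2^-1 : R) = 1 by lra.
  by rewrite scalerDr !scalerBr addrACA -scalerDl half2 scale1r opprD.
rewrite normrZ ger0_norm ?ltW // -[X in _ < X]mulr1 ltr_pM2l //.
exact: E_sc.
Qed.

Lemma nearest_point_unique (C0 : set E) (a z w : E) :
  convex_subset C0 -> C0 z -> C0 w ->
  (forall y, C0 y -> `|a - z| <= `|a - y|) -> `|a - w| <= `|a - z| -> w = z.
Proof.
move=> C0conv C0z C0w z_near awz; apply/eqP; apply: contraT; rewrite eq_sym => zw.
have azw : `|a - z| = `|a - w| by apply/eqP; rewrite eq_le z_near.
have half : (1 - 2^-1 : R) = 2^-1 by lra.
have half0 : (0 : R) <= 2^-1 by rewrite invr_ge0.
have half1 : (2^-1 : R) <= 1 by lra.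
have := C0conv z w 2^-1 C0z C0w half0 half1; rewrite half => /z_near.
by rewrite leNgt (strictly_convex_midpoint_lt azw zw).
Qed.

End StrictlyConvex.

Theorem proposition3p4 (R : realType) (E : completeNormedModType R)
  (C : set E) (S : Type) (op : S -> S -> S) (T : S -> E -> E) :
  reflexive_space E -> strictly_convex_space E ->
  closed C -> convex_subset C ->
  (forall s t u : S, op s (op t u) = op (op s t) u) ->
  (forall s x, C x -> C (T s x)) ->
  (forall s t x, C x -> T (op s t) x = T s (T t x)) ->
  (forall s x y, C x -> C y -> `|T s x - T s y| <= `|x - y|) ->
  ((exists C0 : set E,
      [/\ C0 !=set0, C0 `<=` C, closed C0, convex_subset C0 &
          (forall s x, C0 x -> C0 (T s x))] /\
      attractive_points T C0 !=set0)
   <-> (exists x, C x /\ forall s, T s x = x)).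
Proof.
move=> E_refl E_sc _ _ _ _ _ _; split.
- move=> [C0 [[C0n C0C C0cl C0conv C0inv] [a a_attr]]].
  have [z [C0z z_near]] := reflexive_nearest_point a E_refl C0n C0cl C0conv.
  exists z; split => [|s]; first exact: C0C.
  exact: (nearest_point_unique E_sc C0conv C0z (C0inv s z C0z) z_near (a_attr z s C0z)).
- move=> [x [Cx x_fix]]; exists [set x]; split; last by exists x => y s ->; rewrite x_fix.
  split=> [|y ->||y w t -> -> _ _|s y ->] //; first by exists x.
  + exact/accessible_closed_set1/hausdorff_accessible/norm_hausdorff.
  + by rewrite convex_comb_id.
Qed.
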